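(* Let $\alpha$ be a snowy weak composition. Then (1) $\mathsf{dark}(\alpha)=\{(r,\alpha_r):\alpha_r>0\}$; (2) $\mathsf{rajcode}(\alpha)_r=\alpha_r+|\{r'>r:\alpha_r<\alpha_{r'}\}|$ for every $r$; (3) $\mathsf{raj}(\alpha)=|\alpha|+|\{(r,r'):r<r',\ \alpha_r<\alpha_{r'}\}|$.
   Context: A weak composition is an infinite sequence of nonnegative integers with finitely many positive entries; it is snowy if its positive entries are distinct; $|\alpha|=\sum\alpha_i$. $D(\alpha)=\{(r,c):1\le c\le\alpha_r\}$ (row 1 on top). For a diagram $D$, $\mathsf{snow}(D)$ is built by iterating through rows from bottom to top: in row $r$ take the rightmost cell $(r,c)\in D$ such that column $c$ contains no dark cloud yet; if it exists label it a dark cloud and add snowflake cells at $(r',c)$ for all $r'<r$ with $(r',c)\notin D$. $\mathsf{dark}(\alpha)$ is the set of dark clouds of $\mathsf{snow}(D(\alpha))$, $\mathsf{rajcode}(\alpha)_i$ is the number of cells of $\mathsf{snow}(D(\alpha))$ in row $i$, and $\mathsf{raj}(\alpha)=|\mathsf{rajcode}(\alpha)|$. *)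

From mathcomp Require Import all_boot.
Set Implicit Arguments. Unset Strict Implicit. Unset Printing Implicit Defensive.

(* A weak composition is represented by a finite list [alpha]; its entries
   are alpha_1, alpha_2, ..., alpha_(size alpha), and all later entries are 0.
   Rows are 1-indexed (row 1 on top); [comp_at alpha 0 = 0] by convention. *)
Definition comp_at (alpha : seq nat) (r : nat) : nat :=
  if r is r'.+1 then nth 0 alpha r' else 0.

Definition comp_size (alpha : seq nat) : nat := sumn alpha.

Definition snowy (alpha : seq nat) : bool := uniq [seq x <- alpha | 0 < x].

(* cells (row, column) *)
Definition cell := (nat * nat)%type.

Definition diag (alpha : seq nat) : seq cell :=
  [seq (r, c) | r <- iota 1 (size alpha), c <- iota 1 (comp_at alpha r)].

Definition max_row (D : seq cell) : nat := foldr maxn 0 [seq p.1 | p <- D].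

(* One step of the snow construction in row r, given the dark clouds [dk]
   found so far (in rows below r): take the rightmost cell (r,c) in D whose
   column c contains no dark cloud yet, and make it a dark cloud. *)
Definition snow_step (D : seq cell) (r : nat) (dk : seq cell) : seq cell :=
  let cand := [seq p.2 | p <- D & (p.1 == r) && (p.2 \notin [seq q.2 | q <- dk])] in
  if cand is [::] then dk else (r, foldr maxn 0 cand) :: dk.

(* Dark clouds of snow(D): iterate rows from the bottom (max_row D) to the
   top (row 1); foldr processes the last element of the list first. *)
Definition dark_of (D : seq cell) : seq cell :=
  foldr (snow_step D) [::] (iota 1 (max_row D)).

Definition snowflakes (D : seq cell) : seq cell :=
  [seq p <- [seq (r', q.2) | q <- dark_of D, r' <- iota 1 q.1.-1] | p \notin D].

Definition snow_cells (D : seq cell) : seq cell := undup (D ++ snowflakes D).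

Definition dark (alpha : seq nat) : seq cell := dark_of (diag alpha).

Definition rajcode (alpha : seq nat) (i : nat) : nat :=
  count (fun p : cell => p.1 == i) (snow_cells (diag alpha)).

(* raj(alpha) = |rajcode(alpha)|; all cells of snow(D(alpha)) lie in rows
   1..size alpha, so the sum over these rows is the full sum. *)
Definition raj (alpha : seq nat) : nat :=
  \sum_(1 <= i < (size alpha).+1) rajcode alpha i.

From mathcomp Require Import all_boot zify.

(* For snowy alpha, going up from the bottom row, the candidate columns of
   row r all lie in 1..alpha_r, and column alpha_r is never blocked: the dark
   clouds below sit in columns alpha_r' (r' > r), all different from alpha_r.
   So the dark cloud of row r is its last cell (r, alpha_r).  The snowflakes
   of row r are then the cells (r, alpha_r') with r' > r and
   alpha_r' > alpha_r, in pairwise distinct columns outside D(alpha);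
   counting them gives rajcode, and summing over the rows gives raj. *)

Lemma comp_at_gt0 {alpha r} : 0 < comp_at alpha r -> 0 < r <= size alpha.
Proof.
case: r => [//|r] /=; case: (ltnP r (size alpha)) => // le_size_r.
by rewrite nth_default.
Qed.

Lemma mem_diag alpha r c :
  ((r, c) \in diag alpha) = [&& 0 < r, 0 < c & c <= comp_at alpha r].
Proof.
apply/allpairsPdep/idP.
- case=> [r' [c' [+ + [-> ->]]]].
  by rewrite !mem_iota !add1n !ltnS => /andP[-> _] /andP[-> ->].
- case/and3P=> r_gt0 c_gt0 le_c_r; exists r, c.
  have /andP[_ le_r_size] := comp_at_gt0 (leq_trans c_gt0 le_c_r).
  by rewrite !mem_iota add1n !ltnS r_gt0 c_gt0 le_c_r le_r_size.
Qed.

Lemma uniq_filter_nth_inj (T : eqType) (P : pred T) x0 (s : seq T) i j :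
  uniq (filter P s) -> i < size s -> j < size s ->
  P (nth x0 s i) -> nth x0 s i = nth x0 s j -> i = j.
Proof.
elim: s i j => [//|x s IHs] [|i] [|j] /=; rewrite ?ltnS //.
- move=> + _ lt_j_s Px Ex; rewrite Px /= => /andP[x_notin _]; case/negP: x_notin.
  by rewrite mem_filter Px Ex mem_nth.
- move=> + lt_i_s _ Pi Ei; rewrite -Ei Pi /= => /andP[x_notin _]; case/negP: x_notin.
  by rewrite mem_filter Pi mem_nth.
- move=> uniq_Ps lt_i_s lt_j_s Pi Eij; congr S; apply: IHs Pi Eij => //.
  by case: (P x) uniq_Ps => // /andP[].
Qed.

Lemma snowy_comp_at_inj {alpha r r'} : snowy alpha ->
  0 < comp_at alpha r -> comp_at alpha r = comp_at alpha r' -> r = r'.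
Proof.
move=> snowy_alpha alpha_r_gt0 Err'.
have /andP[r_gt0 le_r] := comp_at_gt0 alpha_r_gt0.
have /andP[r'_gt0 le_r'] : 0 < r' <= size alpha by apply: comp_at_gt0; rewrite -Err'.
case: r r_gt0 le_r alpha_r_gt0 Err' => // i _ lt_i alpha_i_gt0.
case: r' r'_gt0 le_r' => // j _ lt_j Eij; congr S.
exact: uniq_filter_nth_inj snowy_alpha lt_i lt_j alpha_i_gt0 Eij.
Qed.

Lemma foldr_maxn_eq {s : seq nat} {m} :
  m \in s -> {in s, forall x, x <= m} -> foldr maxn 0 s = m.
Proof.
move=> s_m le_s_m; rewrite foldrE; apply/eqP; rewrite eqn_leq.
by rewrite (leq_bigmax_seq m) // andbT; apply/bigmax_leqP_seq => x /le_s_m.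
Qed.

Definition dark_rows alpha (rs : seq nat) : seq cell :=
  [seq (r, comp_at alpha r) | r <- rs & 0 < comp_at alpha r].

Lemma mem_dark_rows alpha rs r c : ((r, c) \in dark_rows alpha rs) =
  [&& r \in rs, 0 < comp_at alpha r & c == comp_at alpha r].
Proof.
apply/mapP/idP => [[r' + [-> ->]]|/and3P[rs_r alpha_r_gt0 /eqP->]].
- by rewrite mem_filter eqxx andbT andbC.
- by exists r; rewrite ?mem_filter ?alpha_r_gt0.
Qed.

Lemma snow_step_empty_row (D : seq cell) r dk :
  (forall c, (r, c) \notin D) -> snow_step D r dk = dk.
Proof.
move=> row_r_empty; rewrite /snow_step (eq_in_filter (a2 := pred0)) ?filter_pred0 //.
case=> r' c D_rc /=; apply/andP => -[/eqP r'_r _].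
by rewrite r'_r (negbTE (row_r_empty c)) in D_rc.
Qed.

Lemma snow_step_rightmost (D : seq cell) r dk m :
  (r, m) \in D -> m \notin [seq q.2 | q <- dk] ->
  (forall c, (r, c) \in D -> c \notin [seq q.2 | q <- dk] -> c <= m) ->
  snow_step D r dk = (r, m) :: dk.
Proof.
move=> D_rm free_m le_free_m; rewrite /snow_step.
have cand_m : m \in [seq p.2 | p <- D & (p.1 == r) && (p.2 \notin [seq q.2 | q <- dk])].
  by apply/mapP; exists (r, m); rewrite // mem_filter /= eqxx free_m.
rewrite (foldr_maxn_eq cand_m) => [|_ /mapP[[r' c] + ->]].
  by case: (map _ _) cand_m.
by rewrite mem_filter /= => /andP[/andP[/eqP-> free_c] D_rc]; apply: le_free_m.
Qed.

Lemma snow_step_diag alpha a rs : snowy alpha -> a \notin rs ->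
  snow_step (diag alpha) a (dark_rows alpha rs) = dark_rows alpha (a :: rs).
Proof.
move=> snowy_alpha rs'a; rewrite /dark_rows /=.
case: (posnP (comp_at alpha a)) => [alpha_a0|alpha_a_gt0].
  by apply: snow_step_empty_row => -[|c]; rewrite mem_diag alpha_a0 /= andbF.
have /andP[a_gt0 _] := comp_at_gt0 alpha_a_gt0.
apply: snow_step_rightmost => [||c]; first by rewrite mem_diag a_gt0 alpha_a_gt0 leqnn.
- rewrite -map_comp; apply/mapP => -[r]; rewrite mem_filter => /andP[_ rs_r].
  by move/(snowy_comp_at_inj snowy_alpha alpha_a_gt0) => a_r; rewrite a_r rs_r in rs'a.
- by rewrite mem_diag => /and3P[].
Qed.

Lemma foldr_snow_step_diag alpha a n : snowy alpha ->
  foldr (snow_step (diag alpha)) [::] (iota a n) = dark_rows alpha (iota a n).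
Proof.
move=> snowy_alpha; elim: n a => [//|n IHn] a /=.
by rewrite IHn snow_step_diag // mem_iota ltnn.
Qed.

Lemma le_max_row (D : seq cell) p : p \in D -> p.1 <= max_row D.
Proof. by move=> D_p; rewrite /max_row foldrE (leq_bigmax_seq p.1) ?map_f. Qed.

Lemma mem_dark alpha r c : snowy alpha ->
  ((r, c) \in dark alpha) = (0 < comp_at alpha r) && (c == comp_at alpha r).
Proof.
move=> snowy_alpha; rewrite /dark /dark_of foldr_snow_step_diag // mem_dark_rows.
case: (posnP (comp_at alpha r)) => [->|alpha_r_gt0]; first by rewrite andbF.
have /andP[r_gt0 _] := comp_at_gt0 alpha_r_gt0.
have /le_max_row /= le_r_max : (r, 1) \in diag alpha by rewrite mem_diag r_gt0.
by rewrite mem_iota r_gt0 add1n ltnS le_r_max.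
Qed.

Lemma mem_snowflakes (D : seq cell) r c : ((r, c) \in snowflakes D) =
  ((r, c) \notin D) && has (fun q : cell => (0 < r < q.1) && (q.2 == c)) (dark_of D).
Proof.
rewrite mem_filter; congr andb; apply/allpairsPdep/hasP.
- case=> q [r' [dark_q + [-> ->]]]; rewrite mem_iota => r'_range.
  by exists q; rewrite ?eqxx ?andbT //; lia.
- case=> q dark_q /andP[r_range /eqP<-]; exists q, r; split=> //.
  by rewrite mem_iota; lia.
Qed.

Definition snow_cols alpha r : seq nat :=
  iota 1 (comp_at alpha r) ++
  [seq comp_at alpha q | q <- iota r.+1 (size alpha - r) & comp_at alpha r < comp_at alpha q].

Lemma uniq_snow_cols alpha r : snowy alpha -> uniq (snow_cols alpha r).
Proof.
move=> snowy_alpha; rewrite cat_uniq iota_uniq /=; apply/andP; split.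
- apply/hasPn => _ /mapP[q + ->]; rewrite mem_filter => /andP[lt_alpha_rq _].
  by rewrite mem_iota add1n ltnS (leqNgt (comp_at alpha q)) lt_alpha_rq andbF.
- rewrite map_inj_in_uniq ?filter_uniq ?iota_uniq // => q q'.
  rewrite mem_filter => /andP[lt_alpha_rq _] _; apply: snowy_comp_at_inj snowy_alpha _.
  exact: leq_ltn_trans lt_alpha_rq.
Qed.

Lemma mem_snow_cells_row alpha r c : snowy alpha -> 0 < r ->
  ((r, c) \in snow_cells (diag alpha)) = (c \in snow_cols alpha r).
Proof.
move=> snowy_alpha r_gt0.
rewrite mem_undup mem_cat mem_snowflakes mem_diag mem_cat mem_iota r_gt0 add1n ltnS /=.
case: (boolP ((0 < c) && (c <= comp_at alpha r))) => //= c_out; apply/hasP/mapP.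
- case=> -[q c'] + /andP[/= lt_r_q /eqP c'_c].
  rewrite c'_c -/(dark alpha) mem_dark // => /andP[alpha_q_gt0 /eqP c_eq].
  exists q => //.
  have /andP[_ le_q_size] := comp_at_gt0 alpha_q_gt0.
  rewrite mem_filter mem_iota; lia.
- case=> q; rewrite mem_filter mem_iota => /andP[lt_alpha_rq q_range] ->.
  by exists (q, comp_at alpha q); rewrite -/(dark alpha) ?mem_dark ?eqxx ?andbT //=; lia.
Qed.

Lemma rajcode_snow_cols alpha r : snowy alpha -> 0 < r ->
  rajcode alpha r = size (snow_cols alpha r).
Proof.
move=> snowy_alpha r_gt0; rewrite /rajcode -size_filter -(size_map (pair r) (snow_cols _ _)).
apply: perm_size; apply: uniq_perm; rewrite ?filter_uniq ?undup_uniq //.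
  by rewrite map_inj_uniq ?uniq_snow_cols // => c c' [].
case=> r' c; rewrite mem_filter /=; have [->|ne_r'r] := eqVneq r' r.
  by rewrite mem_snow_cells_row // mem_map // => c1 c2 [].
by apply/esym/mapP => -[c' _ [r'_r _]]; rewrite r'_r eqxx in ne_r'r.
Qed.

Lemma rajcodeE alpha r : snowy alpha -> 0 < r ->
  rajcode alpha r = comp_at alpha r
    + count (fun r' => comp_at alpha r < comp_at alpha r') (iota r.+1 (size alpha - r)).
Proof.
move=> snowy_alpha r_gt0; rewrite rajcode_snow_cols //.
by rewrite size_cat size_iota size_map size_filter.
Qed.

Lemma count_allpairs_pair (S T : Type) (P : pred (S * T)) s t :
  count P [seq (x, y) | x <- s, y <- t] = \sum_(x <- s) count (fun y => P (x, y)) t.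
Proof.
rewrite count_flatten sumnE !big_map; apply: eq_bigr => x _.
by rewrite count_map; apply: eq_count.
Qed.

Lemma count_iota_gt (a : pred nat) i n : i <= n ->
  count (fun j => (i < j) && a j) (iota 1 n) = count a (iota i.+1 (n - i)).
Proof.
move=> le_i_n; rewrite -{1}(subnKC le_i_n) iotaD count_cat add1n.
rewrite (eq_in_count (a2 := pred0)) ?count_pred0 ?add0n => [|j].
  by apply: eq_in_count => j; rewrite mem_iota => /andP[->].
by rewrite mem_iota add1n ltnS => /andP[_ le_j_i]; rewrite ltnNge le_j_i.
Qed.

Lemma sum_comp_at alpha :
  \sum_(1 <= r < (size alpha).+1) comp_at alpha r = comp_size alpha.
Proof.
by rewrite /comp_size big_add1 /= sumnE [RHS](big_nth 0) !big_mkord; apply: eq_bigr.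
Qed.

Lemma rajE alpha : snowy alpha ->
  raj alpha = comp_size alpha
    + count (fun rr : nat * nat => (rr.1 < rr.2) && (comp_at alpha rr.1 < comp_at alpha rr.2))
            [seq (r, r') | r <- iota 1 (size alpha), r' <- iota 1 (size alpha)].
Proof.
move=> snowy_alpha; rewrite /raj.
under eq_big_nat => r /andP[r_gt0 _] do rewrite rajcodeE //.
rewrite big_split /= sum_comp_at count_allpairs_pair; congr addn.
rewrite /index_iota subSS subn0 big_seq [RHS]big_seq; apply: eq_bigr => r.
by rewrite mem_iota => r_range; rewrite count_iota_gt //; lia.
Qed.

Theorem lemma4p18 (alpha : seq nat) :
  snowy alpha ->
  [/\ (forall r c : nat,
         ((r, c) \in dark alpha) = (0 < comp_at alpha r) && (c == comp_at alpha r)),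
      (forall r : nat, 1 <= r ->
         rajcode alpha r =
           comp_at alpha r
           + count (fun r' => comp_at alpha r < comp_at alpha r')
                   (iota r.+1 (size alpha - r)))
    & raj alpha =
        comp_size alpha
        + count (fun rr : nat * nat =>
                   (rr.1 < rr.2) && (comp_at alpha rr.1 < comp_at alpha rr.2))
                [seq (r, r') | r <- iota 1 (size alpha), r' <- iota 1 (size alpha)]].
Proof.
move=> snowy_alpha; split=> [r c|r r_gt0|].
- exact: mem_dark.
- exact: rajcodeE.
- exact: rajE.
Qed.
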